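(* Let $\mathcal{E}_1=[\theta_1,u_1]$ and $\mathcal{E}_2=[\theta_2,u_2]$ be interval effect algebras, each generating its ordered linear space, each having an order-determining set of states, and each unrestricted. Let $\mathcal{I}$ be an operation from $\mathcal{E}_1$ to $\mathcal{E}_2$. Then: (i) there exists a unique affine map $\mathcal{I}^*\colon\mathcal{E}_2\to\mathcal{E}_1$ such that $s[\mathcal{I}^*(a)]=\mathcal{I}(s)(a)$ for all $s\in\mathcal{S}(\mathcal{E}_1)$ and all $a\in\mathcal{E}_2$; (ii) $\mathcal{I}$ is a channel if and only if $\mathcal{I}^*(u_2)=u_1$.
   Context: Let $V$ be a real vector space with zero $\theta$ and $K\subseteq V$ a positive cone ($\mathbb{R}^+K\subseteq K$, $K+K\subseteq K$, $K\cap(-K)=\{\theta\}$), with partial order $x\le y$ iff $y-x\in K$. For $u\in K$, $u\ne\theta$, the interval effect algebra is $\mathcal{E}=[\theta,u]=\{x\in K: x\le u\}$; for $a,b\in\mathcal{E}$ write $a\perp b$ if $a+b\le u$ (then $a+b\in\mathcal{E}$). $\mathcal{E}$ generates $V$ means $K=\mathbb{R}^+\mathcal{E}$ and $V=K-K$. A state on $\mathcal{E}$ is a map $s\colon\mathcal{E}\to[0,1]$ with $s(u)=1$ and $s(a+b)=s(a)+s(b)$ whenever $a\perp b$; $\mathcal{S}(\mathcal{E})$ denotes the (convex) set of all states. The states are order-determining: for $a,b\in\mathcal{E}$, $a\le b$ iff $s(a)\le s(b)$ for all $s\in\mathcal{S}(\mathcal{E})$. A map between convex sets is affine if it preserves finite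 convex combinations. $\mathcal{E}$ is unrestricted if for every affine $f\colon\mathcal{S}(\mathcal{E})\to[0,1]$ there is $a\in\mathcal{E}$ with $f(s)=s(a)$ for all $s\in\mathcal{S}(\mathcal{E})$. A substate on $\mathcal{E}$ is a function $f=\lambda s$ on $\mathcal{E}$ with $\lambda\in[0,1]$, $s\in\mathcal{S}(\mathcal{E})$; $\mathrm{Sub}(\mathcal{S}(\mathcal{E}))$ is the set of substates. An operation from $\mathcal{E}_1$ to $\mathcal{E}_2$ is an affine map $\mathcal{I}\colon\mathcal{S}(\mathcal{E}_1)\to\mathrm{Sub}(\mathcal{S}(\mathcal{E}_2))$ (convex combinations of substates taken pointwise); it is a channel if $\mathcal{I}(s)\in\mathcal{S}(\mathcal{E}_2)$ for all $s\in\mathcal{S}(\mathcal{E}_1)$. *)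

From HB Require Import structures.
From mathcomp Require Import all_boot all_order all_algebra.
From mathcomp Require Import reals.
Set Implicit Arguments. Unset Strict Implicit. Unset Printing Implicit Defensive.
Import Order.TTheory GRing.Theory Num.Theory.
Local Open Scope ring_scope.

Section EffectAlgebras.
Variables (R : realType) (V : lmodType R).

Definition positive_cone (K : V -> Prop) : Prop :=
  [/\ (forall (r : R) x, 0 <= r -> K x -> K (r *: x)),
      (forall x y, K x -> K y -> K (x + y)) &
      (forall x, K x -> K (- x) -> x = 0)].

Definition cone_le (K : V -> Prop) (x y : V) : Prop := K (y - x).

Definition eff_interval (K : V -> Prop) (u : V) (x : V) : Prop :=
  K x /\ cone_le K x u.

Definition generates (K : V -> Prop) (u : V) : Prop :=
  (forall x, K x <-> exists (r : R) a, 0 <= r /\ eff_interval K u a /\ x = r *: a) /\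
  (forall v, exists k1 k2, K k1 /\ K k2 /\ v = k1 - k2).

(* States: maps E -> [0,1]; encoded as functions V -> R that vanish off E,
   so that each state has a unique representative. *)
Definition is_state (K : V -> Prop) (u : V) (s : V -> R) : Prop :=
  [/\ (forall x, eff_interval K u x -> 0 <= s x <= 1),
      s u = 1,
      (forall a b, eff_interval K u a -> eff_interval K u b -> cone_le K (a + b) u ->
          s (a + b) = s a + s b) &
      (forall x, ~ eff_interval K u x -> s x = 0)].

Definition order_determining (K : V -> Prop) (u : V) : Prop :=
  forall a b, eff_interval K u a -> eff_interval K u b ->
    (cone_le K a b <-> forall s, is_state K u s -> s a <= s b).

Definition fconv (t : R) (f g : V -> R) : V -> R :=
  fun x => t * f x + (1 - t) * g x.

Definition unrestricted (K : V -> Prop) (u : V) : Prop :=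
  forall f : (V -> R) -> R,
    (forall s, is_state K u s -> 0 <= f s <= 1) ->
    (forall s1 s2 (t : R), is_state K u s1 -> is_state K u s2 -> 0 <= t <= 1 ->
        f (fconv t s1 s2) = t * f s1 + (1 - t) * f s2) ->
    exists a, eff_interval K u a /\ forall s, is_state K u s -> f s = s a.

Definition is_substate (K : V -> Prop) (u : V) (f : V -> R) : Prop :=
  exists (l : R) s, 0 <= l <= 1 /\ is_state K u s /\ f = (fun x => l * s x).

End EffectAlgebras.

Definition is_operation (R : realType) (V1 V2 : lmodType R)
  (K1 : V1 -> Prop) (u1 : V1) (K2 : V2 -> Prop) (u2 : V2)
  (I : (V1 -> R) -> (V2 -> R)) : Prop :=
  (forall s, is_state K1 u1 s -> is_substate K2 u2 (I s)) /\
  (forall s1 s2 (t : R), is_state K1 u1 s1 -> is_state K1 u1 s2 -> 0 <= t <= 1 ->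
      I (fconv t s1 s2) = fconv t (I s1) (I s2)).

Definition is_channel (R : realType) (V1 V2 : lmodType R)
  (K1 : V1 -> Prop) (u1 : V1) (K2 : V2 -> Prop) (u2 : V2)
  (I : (V1 -> R) -> (V2 -> R)) : Prop :=
  is_operation K1 u1 K2 u2 I /\ (forall s, is_state K1 u1 s -> is_state K2 u2 (I s)).

Definition affine_between (R : realType) (V1 V2 : lmodType R)
  (K2 : V2 -> Prop) (u2 : V2) (K1 : V1 -> Prop) (u1 : V1) (J : V2 -> V1) : Prop :=
  (forall a, eff_interval K2 u2 a -> eff_interval K1 u1 (J a)) /\
  (forall a b (t : R), eff_interval K2 u2 a -> eff_interval K2 u2 b -> 0 <= t <= 1 ->
      J (t *: a + (1 - t) *: b) = t *: J a + (1 - t) *: J b).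

Definition dual_of (R : realType) (V1 V2 : lmodType R)
  (K1 : V1 -> Prop) (u1 : V1) (K2 : V2 -> Prop) (u2 : V2)
  (I : (V1 -> R) -> (V2 -> R)) (J : V2 -> V1) : Prop :=
  affine_between K2 u2 K1 u1 J /\
  (forall s a, is_state K1 u1 s -> eff_interval K2 u2 a -> s (J a) = I s a).

Arguments positive_cone {R V} K.
Arguments cone_le {R V} K x y.
Arguments eff_interval {R V} K u x.
Arguments generates {R V} K u.
Arguments is_state {R V} K u s.
Arguments order_determining {R V} K u.
Arguments fconv {R V} t f g _.
Arguments unrestricted {R V} K u.
Arguments is_substate {R V} K u f.
Arguments is_operation {R V1 V2} K1 u1 K2 u2 I.
Arguments is_channel {R V1 V2} K1 u1 K2 u2 I.
Arguments affine_between {R V1 V2} K2 u2 K1 u1 J.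
Arguments dual_of {R V1 V2} K1 u1 K2 u2 I J.

From HB Require Import structures.
From mathcomp Require Import all_boot all_order all_algebra.
From mathcomp Require Import reals.
From mathcomp Require Import ring lra.
From Stdlib Require Import ClassicalEpsilon FunctionalExtensionality.
Import Order.TTheory GRing.Theory Num.Theory.
Local Open Scope ring_scope.
Set Implicit Arguments. Unset Strict Implicit.

(* For a in [0, u2], the map s |-> I(s)(a) is affine from the states of E1 into
   [0, 1], so unrestrictedness of E1 represents it as s |-> s(b) for some b in
   E1; since the states of E1 are order-determining, they separate points and b
   is unique. This b is the dual I*(a). Affinity of I*, uniqueness and the
   channel criterion I*(u2) = u1 are then identities between state values,
   checked by separation; they rely on states being affine on an effect
   interval, which holds because t |-> s(t x) is additive and nonnegative on
   [0, 1], hence linear. *)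

Lemma eq0_of_natmul_norm_bounded (R : archiRealFieldType) (x c : R) :
  (forall n : nat, n.+1%:R * `|x| <= c) -> x = 0.
Proof.
move=> bounded; apply/eqP/negPn/negP => x_neq0.
have x_gt0 : 0 < `|x| by rewrite normr_gt0.
have := bounded (Num.truncn (c / `|x|)).
by rewrite -ler_pdivlMr // leNgt truncnS_gt.
Qed.

Section AdditiveOnUnitInterval.
Variables (R : archiRealFieldType) (f : R -> R).
Hypothesis f_ge0 : forall t, 0 <= t <= 1 -> 0 <= f t.
Hypothesis fD : forall t t', 0 <= t -> 0 <= t' -> t + t' <= 1 -> f (t + t') = f t + f t'.

Lemma additive01_0 : f 0 = 0.
Proof. by have := @fD 0 0; rewrite addr0 lexx ler01 => /(_ isT isT isT); lra. Qed.

Lemma additive01_le t t' : 0 <= t -> t <= t' -> t' <= 1 -> f t <= f t'.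
Proof.
move=> t_ge0 le_tt' t'_le1.
have -> : t' = t + (t' - t) by rewrite subrKC.
by rewrite fD ?subr_ge0 ?subrKC // lerDl f_ge0 //; apply/andP; split; lra.
Qed.

Lemma additive01_nat n k : (k <= n.+1)%N -> f (k%:R / n.+1%:R) = k%:R * f n.+1%:R^-1.
Proof.
elim: k => [|k IHk] lt_kn; first by rewrite !mul0r additive01_0.
have N_gt0 : 0 < n.+1%:R :> R by rewrite ltr0n.
have split_k : k.+1%:R / n.+1%:R = k%:R / n.+1%:R + n.+1%:R^-1 :> R.
  by rewrite -[in LHS]natr1 mulrDl mul1r.
rewrite split_k fD ?IHk 1?ltnW ?divr_ge0 ?invr_ge0 ?ler0n //.
  by rewrite -[in RHS]natr1 mulrDl mul1r.
by rewrite -split_k ler_pdivrMr // mul1r ler_nat.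
Qed.

Lemma additive01_frac n k : (k <= n.+1)%N -> f (k%:R / n.+1%:R) = k%:R / n.+1%:R * f 1.
Proof.
move=> le_kn; have N_neq0 : n.+1%:R != 0 :> R by rewrite pnatr_eq0.
have := additive01_nat (leqnn n.+1); rewrite divff // => ->.
by rewrite additive01_nat // mulrA divfK.
Qed.

Lemma additive01_lower n t : 0 <= t <= 1 -> (t - n.+1%:R^-1) * f 1 <= f t.
Proof.
case/andP=> t_ge0 t_le1; have N_gt0 : 0 < n.+1%:R :> R by rewrite ltr0n.
set k := Num.truncn (t * n.+1%:R).
have /andP[k_le k_gt] : k%:R <= t * n.+1%:R < k.+1%:R.
  by apply: truncn_itv; exact: mulr_ge0 t_ge0 (ltW N_gt0).
have le_kn : (k <= n.+1)%N.
  by rewrite -(ler_nat R) (le_trans k_le) //; nra.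
have le_k_t : k%:R / n.+1%:R <= t by rewrite ler_pdivrMr.
apply: le_trans (additive01_le _ le_k_t t_le1); last by rewrite divr_ge0 ?ler0n ?ltW.
rewrite additive01_frac // ler_wpM2r ?f_ge0 ?ler01 ?lexx //.
have -> : t - n.+1%:R^-1 = (t * n.+1%:R - 1) / n.+1%:R.
  by rewrite mulrBl mulfK ?gt_eqF // mul1r.
by rewrite ler_pM2r ?invr_gt0 //; move: k_gt; rewrite -natr1; lra.
Qed.

Lemma additive01_linear t : 0 <= t <= 1 -> f t = t * f 1.
Proof.
move=> t01; have t'01 : 0 <= 1 - t <= 1 by case/andP: t01 => *; apply/andP; split; lra.
apply/eqP; rewrite -subr_eq0; apply/eqP.
apply: (eq0_of_natmul_norm_bounded (c := f 1)) => n.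
have N_gt0 : 0 < n.+1%:R :> R by rewrite ltr0n.
have ft_f1t : f t + f (1 - t) = f 1.
  by case/andP: t01 => *; rewrite -fD ?subrKC // subr_ge0.
have bound : `|f t - t * f 1| <= n.+1%:R^-1 * f 1.
  move: (additive01_lower n t01) (additive01_lower n t'01).
  by rewrite ler_norml !mulrBl mul1r; set e := _^-1 * f 1; lra.
by rewrite -(ler_pM2l N_gt0) mulrA divff ?mul1r ?gt_eqF in bound.
Qed.

End AdditiveOnUnitInterval.

Section IntervalEffectAlgebra.
Variables (R : realType) (V : lmodType R) (K : V -> Prop) (u : V).
Hypotheses (hK : positive_cone K) (huK : K u).

Lemma coneZ r x : 0 <= r -> K x -> K (r *: x).
Proof. by case: hK => Z _ _; apply: Z. Qed.

Lemma coneD x y : K x -> K y -> K (x + y).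
Proof. by case: hK => _ D _; apply: D. Qed.

Lemma cone0 : K 0.
Proof. by rewrite -(scale0r u); apply: coneZ. Qed.

Lemma cone_le_refl x : cone_le K x x.
Proof. by rewrite /cone_le subrr; apply: cone0. Qed.

Lemma eff_interval0 : eff_interval K u 0.
Proof. by split; [apply: cone0 | rewrite /cone_le subr0]. Qed.

Lemma eff_interval_unit : eff_interval K u u.
Proof. by split=> //; apply: cone_le_refl. Qed.

Lemma eff_interval_conv t x y : 0 <= t <= 1 ->
  eff_interval K u x -> eff_interval K u y -> eff_interval K u (t *: x + (1 - t) *: y).
Proof.
case/andP=> t_ge0 t_le1 [Kx le_xu] [Ky le_yu].
have t'_ge0 : 0 <= 1 - t by rewrite subr_ge0.
split; first by apply: coneD; apply: coneZ.
rewrite /cone_le; have -> : u - (t *: x + (1 - t) *: y) = t *: (u - x) + (1 - t) *: (u - y).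
  by rewrite !scalerBr opprD addrACA -scalerDl subrKC scale1r.
by apply: coneD; apply: coneZ.
Qed.

Lemma eff_intervalZ t x : 0 <= t <= 1 -> eff_interval K u x -> eff_interval K u (t *: x).
Proof.
move=> t01 Ex; have := eff_interval_conv t01 Ex eff_interval0.
by rewrite scaler0 addr0.
Qed.

Lemma eq_by_states a b : order_determining K u ->
  eff_interval K u a -> eff_interval K u b ->
  (forall s, is_state K u s -> s a = s b) -> a = b.
Proof.
move=> od Ea Eb sab; case: hK => _ _ pointed.
have le_ab : cone_le K a b by apply/(od a b Ea Eb) => s /sab ->.
have le_ba : cone_le K b a by apply/(od b a Eb Ea) => s /sab ->.
by apply/eqP; rewrite -subr_eq0; apply/eqP/pointed; rewrite // opprB.
Qed.

Section State.
Variable s : V -> R.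
Hypothesis hs : is_state K u s.

Lemma state_range a : eff_interval K u a -> 0 <= s a <= 1.
Proof. by case: hs => range _ _ _; apply: range. Qed.

Lemma state_unit : s u = 1.
Proof. by case: hs. Qed.

Lemma stateD a b : eff_interval K u a -> eff_interval K u b -> cone_le K (a + b) u ->
  s (a + b) = s a + s b.
Proof. by case: hs => _ _ D _; apply: D. Qed.

Lemma stateZ t x : 0 <= t <= 1 -> eff_interval K u x -> s (t *: x) = t * s x.
Proof.
move=> t01 Ex; rewrite -[in RHS](scale1r x).
apply: (@additive01_linear _ (fun t => s (t *: x))) => // [r r01|r r' r_ge0 r'_ge0 le_rr'1].
  by case/andP: (state_range (eff_intervalZ r01 Ex)).
have r01 : 0 <= r <= 1 by apply/andP; split; lra.
have r'01 : 0 <= r' <= 1 by apply/andP; split; lra.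
have rr'01 : 0 <= r + r' <= 1 by apply/andP; split; lra.
have [_ le_u] := eff_intervalZ rr'01 Ex; rewrite scalerDl in le_u.
by rewrite scalerDl stateD //; apply: eff_intervalZ.
Qed.

Lemma state_conv t a b : 0 <= t <= 1 -> eff_interval K u a -> eff_interval K u b ->
  s (t *: a + (1 - t) *: b) = t * s a + (1 - t) * s b.
Proof.
move=> t01 Ea Eb; have t'01 : 0 <= 1 - t <= 1.
  by case/andP: t01 => *; apply/andP; split; lra.
have [_ le_u] := eff_interval_conv t01 Ea Eb.
by rewrite stateD ?stateZ //; apply: eff_intervalZ.
Qed.

End State.

Lemma substate_range f a : is_substate K u f -> eff_interval K u a -> 0 <= f a <= 1.
Proof.
case=> l [s [/andP[l_ge0 l_le1] [hs ->]]] /(state_range hs) /andP[sa_ge0 sa_le1].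
by rewrite mulr_ge0 //= mulr_ile1.
Qed.

Lemma substate_conv f t a b : is_substate K u f -> 0 <= t <= 1 ->
  eff_interval K u a -> eff_interval K u b ->
  f (t *: a + (1 - t) *: b) = t * f a + (1 - t) * f b.
Proof. by case=> l [s [_ [hs ->]]] t01 Ea Eb; rewrite state_conv //; ring. Qed.

Lemma substate_unit_state f : is_substate K u f -> f u = 1 -> is_state K u f.
Proof.
case=> l [s [_ [hs ->]]]; rewrite state_unit // mulr1 => ->.
by have -> : (fun x => 1 * s x) = s by apply: functional_extensionality => x; rewrite mul1r.
Qed.

End IntervalEffectAlgebra.

Section OperationDual.
Variables (R : realType) (V1 V2 : lmodType R).
Variables (K1 : V1 -> Prop) (u1 : V1) (K2 : V2 -> Prop) (u2 : V2).
Hypotheses (hK1 : positive_cone K1) (hu1K : K1 u1) (hK2 : positive_cone K2) (hu2K : K2 u2).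
Hypotheses (hod1 : order_determining K1 u1) (hun1 : unrestricted K1 u1).
Variable I : (V1 -> R) -> (V2 -> R).
Hypothesis hI : is_operation K1 u1 K2 u2 I.

Definition is_dual_point (a : V2) (b : V1) : Prop :=
  eff_interval K1 u1 b /\ forall s, is_state K1 u1 s -> s b = I s a.

Lemma exists_dual_point a : eff_interval K2 u2 a -> exists b, is_dual_point a b.
Proof.
case: hI => substate_I affine_I Ea.
have range_Ia s : is_state K1 u1 s -> 0 <= I s a <= 1.
  by move/substate_I/substate_range; apply.
have affine_Ia s1 s2 t : is_state K1 u1 s1 -> is_state K1 u1 s2 -> 0 <= t <= 1 ->
    I (fconv t s1 s2) a = t * I s1 a + (1 - t) * I s2 a.
  by move=> hs1 hs2 t01; rewrite affine_I.
have [b [Eb sbE]] := hun1 range_Ia affine_Ia.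
by exists b; split=> // s hs; rewrite sbE.
Qed.

(* Off the interval [0, u2] the value is an unspecified choice. *)
Definition operation_dual (a : V2) : V1 := epsilon (inhabits 0) (is_dual_point a).

Lemma operation_dualP a : eff_interval K2 u2 a -> is_dual_point a (operation_dual a).
Proof. by move/exists_dual_point; apply: epsilon_spec. Qed.

Lemma operation_dual_affine : affine_between K2 u2 K1 u1 operation_dual.
Proof.
split=> [a /operation_dualP [] //|a b t Ea Eb t01].
have [Ja sJa] := operation_dualP Ea; have [Jb sJb] := operation_dualP Eb.
have Ec := eff_interval_conv hK2 t01 Ea Eb.
have [Jc sJc] := operation_dualP Ec.
apply: (eq_by_states hK1 hod1) => // [|s hs]; first exact: eff_interval_conv.
case: hI => substate_I _.
rewrite sJc // (state_conv hK1 hu1K hs t01 Ja Jb) sJa // sJb //.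
by rewrite (substate_conv hK2 hu2K (substate_I s hs)).
Qed.

Lemma dual_of_operation_dual : dual_of K1 u1 K2 u2 I operation_dual.
Proof.
split; first exact: operation_dual_affine.
by move=> s a hs /operation_dualP [_ ->].
Qed.

Lemma dual_of_unique J a : dual_of K1 u1 K2 u2 I J -> eff_interval K2 u2 a ->
  J a = operation_dual a.
Proof.
move=> [[EJ _] sJ] Ea; have [EJ' sJ'] := operation_dualP Ea.
by apply: (eq_by_states hK1 hod1) => // [|s hs]; rewrite ?sJ ?sJ' //; apply: EJ.
Qed.

Lemma channelE : is_channel K1 u1 K2 u2 I <-> operation_dual u2 = u1.
Proof.
have [EJu sJu] := operation_dualP (eff_interval_unit hK2 hu2K).
split=> [[_ state_I]|Ju].
  apply: (eq_by_states hK1 hod1) => //; first exact: eff_interval_unit.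
  by move=> s hs; rewrite sJu // (state_unit hs) (state_unit (state_I s hs)).
split=> // s hs; case: hI => substate_I _.
by apply: substate_unit_state (substate_I s hs) _; rewrite -sJu // Ju (state_unit hs).
Qed.

End OperationDual.

Unset Implicit Arguments. Set Strict Implicit.

Theorem lemma3p1 (R : realType) (V1 V2 : lmodType R)
  (K1 : V1 -> Prop) (u1 : V1) (K2 : V2 -> Prop) (u2 : V2)
  (hK1 : positive_cone K1) (hu1K : K1 u1) (hu1 : u1 <> 0)
  (hK2 : positive_cone K2) (hu2K : K2 u2) (hu2 : u2 <> 0)
  (hgen1 : generates K1 u1) (hgen2 : generates K2 u2)
  (hod1 : order_determining K1 u1) (hod2 : order_determining K2 u2)
  (hun1 : unrestricted K1 u1) (hun2 : unrestricted K2 u2)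
  (I : (V1 -> R) -> (V2 -> R)) (hI : is_operation K1 u1 K2 u2 I) :
  exists J : V2 -> V1,
    [/\ dual_of K1 u1 K2 u2 I J,
        (forall J', dual_of K1 u1 K2 u2 I J' -> forall a, eff_interval K2 u2 a -> J' a = J a) &
        (is_channel K1 u1 K2 u2 I <-> J u2 = u1)].
Proof.
exists (operation_dual K1 u1 I); split.
- exact: dual_of_operation_dual.
- by move=> J' dJ' a; apply: dual_of_unique.
- exact: channelE.
Qed.
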